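(* Let $\mathfrak{g}$ be one of the $6$-dimensional nilpotent Lie algebras $(0,0,12,13,14,34+52)$ or $(0,0,12,13,14+23,34+52)$. Then $\mathfrak{g}$ has no coherent splitting and no half-flat structure.
   Context: Notation: $(0,0,12,13,14,34+52)$ denotes the Lie algebra having a basis $e^1,\dots,e^6$ of $\mathfrak{g}^*$ with $de^1=de^2=0$, $de^3=e^{12}$, $de^4=e^{13}$, $de^5=e^{14}$, $de^6=e^{34}+e^{52}$, where $e^{ij}=e^i\wedge e^j$ and $d$ is the Chevalley–Eilenberg differential; similarly for the other algebra with $de^5=e^{14}+e^{23}$. An $\mathrm{SU}(3)$-structure on a $6$-dimensional Lie algebra is a pair $(\omega,\psi^+)\in\Lambda^2\mathfrak{g}^*\times\Lambda^3\mathfrak{g}^*$ such that for some basis $\eta^1,\dots,\eta^6$ of $\mathfrak{g}^*$ and some $3$-form $\psi^-$, $\omega=\eta^{12}+\eta^{34}+\eta^{56}$ and $\psi^++i\psi^-=(\eta^1+i\eta^2)\wedge(\eta^3+i\eta^4)\wedge(\eta^5+i\eta^6)$; it is half-flat if $d\omega\wedge\omega=0$ and $d\psi^+=0$. A coherent splitting is a decomposition $\mathfrak{g}^*=V_1\oplus V_2$ with $\dim V_1=2$ such that, with $\Lambda^{p,q}=\Lambda^pV_1\otimes\Lambda^qV_2$, $d(\Lambda^{p,q})\subset\Lambda^{p+1,q}+\Lambda^{p+2,q-1}$ for all $p,q$. *)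

(* exterior algebra of the dual of a 6-dim real Lie algebra,
   written in the standard basis e^1..e^6 (indices 0..5 in Rocq). *)
From HB Require Import structures.
From mathcomp Require Import all_boot all_order all_algebra.
From mathcomp Require Import reals.
Set Implicit Arguments. Unset Strict Implicit. Unset Printing Implicit Defensive.
Import Order.TTheory GRing.Theory Num.Theory.
Local Open Scope ring_scope.

Section Forms.
Variable R : realType.

(* A form on g (element of Lambda of the dual of g) : coefficient of e^I for each subset I,
   where e^I = e^{i1} /\ ... /\ e^{ik} with i1 < ... < ik. *)
Local Notation cform := {ffun {set 'I_6} -> R}.

(* e^I /\ e^J = (-1)^(inv I J) e^(I u J) for disjoint I, J *)
Definition inv_cnt (I J : {set 'I_6}) : nat :=
  #|[set p : 'I_6 * 'I_6 | (p.1 \in I) && (p.2 \in J) && (p.2 < p.1)%N]|.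

Definition wedge (a b : cform) : cform :=
  [ffun K => \sum_(I : {set 'I_6}) \sum_(J : {set 'I_6} |
       [disjoint I & J] && (I :|: J == K))
       (-1) ^+ (inv_cnt I J) * a I * b J].

Definition sc (c : R) (a : cform) : cform := [ffun K => c * a K].

Definition basis (I : {set 'I_6}) : cform := [ffun K => (K == I)%:R].
Definition one_form : cform := basis set0.
Definition e (i : 'I_6) : cform := basis [set i].

(* A Lie algebra structure given by d on the basis of g^* *)
Definition structure := 'I_6 -> cform.

Definition dbasis (de : structure) (I : {set 'I_6}) : cform :=
  \sum_(i in I) sc ((-1) ^+ #|[set j in I | (j < i)%N]|) (wedge (de i) (basis (I :\ i))).
Definition d (de : structure) (a : cform) : cform :=
  \sum_(I : {set 'I_6}) sc (a I) (dbasis de I).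

Definition o (k : nat) : 'I_6 := inord k.
(* (0,0,12,13,14,34+52) *)
Definition g1 : structure := fun i =>
  match nat_of_ord i with
  | 2 => wedge (e (o 0)) (e (o 1))
  | 3 => wedge (e (o 0)) (e (o 2))
  | 4 => wedge (e (o 0)) (e (o 3))
  | 5 => wedge (e (o 2)) (e (o 3)) + wedge (e (o 4)) (e (o 1))
  | _ => 0
  end.
(* (0,0,12,13,14+23,34+52) *)
Definition g2 : structure := fun i =>
  match nat_of_ord i with
  | 2 => wedge (e (o 0)) (e (o 1))
  | 3 => wedge (e (o 0)) (e (o 2))
  | 4 => wedge (e (o 0)) (e (o 3)) + wedge (e (o 1)) (e (o 2))
  | 5 => wedge (e (o 2)) (e (o 3)) + wedge (e (o 4)) (e (o 1))
  | _ => 0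
  end.

(* A basis eta^1..eta^6 of g^* given by an invertible matrix P:
   eta^{k+1} = sum_j P k j e^{j+1} *)
Definition eta (P : 'M[R]_6) (k : 'I_6) : cform := \sum_j sc (P k j) (e j).
Definition etaw (P : 'M[R]_6) (I : {set 'I_6}) : cform :=
  foldr wedge one_form [seq eta P k | k <- enum I].

(* complex forms as pairs (real part, imaginary part) *)
Definition cwedge (a b : cform * cform) : cform * cform :=
  (wedge a.1 b.1 - wedge a.2 b.2, wedge a.1 b.2 + wedge a.2 b.1).

Definition SU3_structure (om psip : cform) : Prop :=
  exists P : 'M[R]_6, P \in unitmx /\
  exists psim : cform,
    om = wedge (eta P (o 0)) (eta P (o 1)) + wedge (eta P (o 2)) (eta P (o 3))
         + wedge (eta P (o 4)) (eta P (o 5)) /\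
    (psip, psim) = cwedge (cwedge (eta P (o 0), eta P (o 1))
                                  (eta P (o 2), eta P (o 3)))
                          (eta P (o 4), eta P (o 5)).

Definition half_flat (de : structure) (om psip : cform) : Prop :=
  SU3_structure om psip /\ wedge (d de om) om = 0 /\ d de psip = 0.

Definition has_half_flat (de : structure) : Prop :=
  exists om psip, half_flat de om psip.

(* Coherent splittings: g^* = V1 (+) V2 with V1 = span(eta^1,eta^2),
   V2 = span(eta^3..eta^6).  The bidegree of eta^I is
   (#(I n {1,2}), #(I n {3..6})). *)
Definition bideg (I : {set 'I_6}) : nat * nat :=
  (#|[set i in I | (i < 2)%N]|, #|[set i in I | (2 <= i)%N]|).

Definition in_span (P : 'M[R]_6) (S : {set 'I_6} -> bool) (a : cform) : Prop :=
  exists c : {set 'I_6} -> R, a = \sum_(J | S J) sc (c J) (etaw P J).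

Definition Lam (p q : nat) (J : {set 'I_6}) : bool := bideg J == (p, q).

Definition coherent_splitting (de : structure) (P : 'M[R]_6) : Prop :=
  P \in unitmx /\
  forall (p q : nat) (a : cform), in_span P (Lam p q) a ->
    in_span P (fun J => Lam p.+1 q J || ((bideg J).1 == p.+2) && ((bideg J).2.+1 == q))
      (d de a).

Definition has_coherent_splitting (de : structure) : Prop :=
  exists P, coherent_splitting de P.

End Forms.

From Pilot Require Import Defs.
From Stdlib Require Import PeanoNat.
From HB Require Import structures.
From mathcomp Require Import all_boot all_order all_algebra.
From mathcomp Require Import reals ring lra zify.
Set Implicit Arguments. Unset Strict Implicit. Unset Printing Implicit Defensive.
Import Order.TTheory GRing.Theory Num.Theory.
Local Open Scope ring_scope.

(* If g^* = V1 (+) V2 is coherent, with V1 spanned by eta^0 and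
   eta^1, then d maps each eta^i into forms all of whose terms contain eta^0 or eta^1, so
   theta = eta^0 /\ eta^1 satisfies theta /\ d alpha = 0 for every 1-form alpha, in
   particular theta /\ de^j = 0.  For both algebras the components of theta /\ de^j
   contain every 2x2 minor of the first two rows of the coframe matrix, so eta^0 and eta^1
   would be dependent.

   Regard the coframe as three complex 1-forms zeta_k =
   eta^(2k) + i eta^(2k+1), i.e. regard the columns of the coframe matrix as vectors z_j of
   C^3.  For both algebras, d psi+ = 0 kills Re det(z_a, z_b, z_c) for the six triples
   045, 145, 245, 345, 135, 235, and d omega /\ omega = 0 kills the coefficients of
   e^{1345} and e^{2345} in omega /\ omega.  The first four triples give z_4 x z_5 = 0,
   so z_5 = lambda z_4 with lambda not real (the coframe is invertible); the remaining
   equations then force z_3 x z_4 = 0 as well, and z_3, z_4, z_5 become linearly dependent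
   over the reals. *)

Arguments o : simpl never.

Lemma val_o i : (i < 6)%N -> nat_of_ord (o i) = i.
Proof. exact: inordK. Qed.

Lemma o_val (i : 'I_6) : o i = i.
Proof. exact: inord_val. Qed.

Lemma big_ord6 (T : Type) (idx : T) (op : T -> T -> T) (F : 'I_6 -> T) :
  \big[op/idx]_(i : 'I_6) F i = \big[op/idx]_(i <- iota 0 6) F (o i).
Proof.
transitivity (\big[op/idx]_(0 <= i < 6) F (o i)); last by [].
by rewrite big_mkord; apply: eq_bigr => i _; rewrite o_val.
Qed.

(* [bset n] is the subset of {0,...,5} whose indicator is the binary expansion of [n]. *)
Definition bset (n : nat) : {set 'I_6} := [set i : 'I_6 | Nat.testbit n i].
Arguments bset : simpl never.

Lemma in_bset n (i : 'I_6) : (i \in bset n) = Nat.testbit n i.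
Proof. by rewrite inE. Qed.

Definition cnt_below (m i : nat) : nat :=
  count (fun j => Nat.testbit m j && (j < i)%N) (iota 0 6).
Definition inv_bits (m n : nat) : nat :=
  sumn [seq count (fun j => [&& Nat.testbit m i, Nat.testbit n j & (j < i)%N]) (iota 0 6)
       | i <- iota 0 6].
Definition subbits (m k : nat) : bool :=
  all (fun i => Nat.testbit m i ==> Nat.testbit k i) (iota 0 6).
Definition eqbits (m k : nat) : bool :=
  all (fun i => Nat.testbit m i == Nat.testbit k i) (iota 0 6).

Lemma card_ord6 (p : pred 'I_6) : #|[set i | p i]| = count (p \o o) (iota 0 6).
Proof.
rewrite -sum1_card big_mkcond big_ord6 -sum1_count [RHS]big_mkcond.
by apply: eq_bigr => i _; rewrite inE.
Qed.

Lemma card_bset_below m i : #|[set j in bset m | (j < i)%N]| = cnt_below m i.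
Proof.
rewrite (card_ord6 (fun j => (j \in bset m) && (j < i)%N)); apply: eq_in_count => j.
by rewrite mem_iota => /andP[_ hj] /=; rewrite in_bset val_o.
Qed.

Lemma inv_cnt_bset m n : inv_cnt (bset m) (bset n) = inv_bits m n.
Proof.
rewrite /inv_cnt -sum1_card big_mkcond /=.
rewrite (eq_bigr (fun p => (p.1 \in bset m) && (p.2 \in bset n) && (p.2 < p.1)%N : nat));
  last by move=> p _; rewrite inE; case: (_ && _).
rewrite -(pair_bigA _ (fun i j => (i \in bset m) && (j \in bset n) && (j < i)%N : nat)) /=.
rewrite big_ord6 /inv_bits sumnE big_map; apply: eq_big_seq => i; rewrite mem_iota => /andP[_ hi].
rewrite big_ord6 -sum1_count [RHS]big_mkcond; apply: eq_big_seq => j.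
rewrite mem_iota => /andP[_ hj].
by rewrite !in_bset !val_o // andbA.
Qed.

Lemma subset_bset m k : (bset m \subset bset k) = subbits m k.
Proof.
apply/subsetP/allP => [H i|H i].
- rewrite mem_iota => /andP[_ hi]; apply/implyP.
  by have := H (o i); rewrite !in_bset val_o.
- by rewrite !in_bset => hm; apply: (implyP (H i _)); rewrite // mem_iota ltn_ord.
Qed.

Lemma eq_bset m k : (bset m == bset k) = eqbits m k.
Proof.
apply/eqP/allP => [/setP H i|H].
- by rewrite mem_iota => /andP[_ hi]; have := H (o i); rewrite !in_bset val_o // => ->.
- by apply/setP => i; rewrite !in_bset; apply/eqP/H; rewrite mem_iota ltn_ord.
Qed.

Lemma setD_bset k m : bset k :\: bset m = bset (Nat.ldiff k m).
Proof. by apply/setP => i; rewrite !inE Nat.ldiff_spec andbC. Qed.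

Lemma set1_bset i : (i < 6)%N -> [set o i] = bset (Nat.pow 2 i).
Proof.
move=> hi; apply/setP => j; rewrite !inE Nat.pow2_bits_eqb.
case: Nat.eqb_spec => [->|hij]; first by rewrite o_val eqxx.
by apply/eqP => hj; apply: hij; rewrite hj val_o.
Qed.

Lemma bset_inj : {in gtn 64 &, injective bset}.
Proof.
move=> m n hm hn /setP H; apply/Nat.bits_inj => i.
case: (ltnP i 6) => hi; first by have := H (o i); rewrite !in_bset val_o.
have above k : (k < 64)%N -> Nat.testbit k i = false.
  move=> hk; apply: Nat.bits_above_log2.
  have : (Nat.log2 k <= Nat.log2 63)%coq_nat by apply: Nat.log2_le_mono; lia.
  by have -> : Nat.log2 63 = 5%N by []; lia.
by rewrite !above.
Qed.

Section FormComponents.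
Variable R : realType.
Local Notation cform := {ffun {set 'I_6} -> R}.

Lemma big_sets (F : {set 'I_6} -> R) :
  \sum_(I : {set 'I_6}) F I = \sum_(m <- iota 0 64) F (bset m).
Proof.
have bij : bijective (fun m : 'I_64 => bset m).
  apply: inj_card_bij => [m n h|]; first by apply/val_inj/(bset_inj _ _ h); apply: ltn_ord.
  by rewrite card_ord -cardsT -powersetT card_powerset cardsT card_ord.
by rewrite (reindex _ (onW_bij _ bij)) /= -(big_mkord xpredT (F \o bset)).
Qed.

Lemma wedgeE (a b : cform) K : wedge a b K =
  \sum_(I : {set 'I_6} | I \subset K) (-1) ^+ inv_cnt I (K :\: I) * a I * b (K :\: I).
Proof.
rewrite ffunE [RHS]big_mkcond; apply: eq_bigr => I _; case: ifPn => hIK.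
- rewrite (big_pred1 (K :\: I)) // => J; apply/andP/eqP => [[dis /eqP <-]|->].
    by rewrite setDUl setDv set0U; apply/esym/setDidPl; rewrite disjoint_sym.
  split; first by rewrite -setI_eq0; apply/eqP/setP => x; rewrite !inE; case: (x \in I).
  by apply/eqP/setP => x; rewrite !inE; case: (boolP (x \in I)) => //= /(subsetP hIK) ->.
- by rewrite big_pred0 // => J; apply: contraNF hIK => /andP[_ /eqP <-]; rewrite subsetUl.
Qed.

Lemma wedge_basis (a : cform) J K : wedge a (basis R J) K =
  if J \subset K then (-1) ^+ inv_cnt (K :\: J) J * a (K :\: J) else 0.
Proof.
rewrite wedgeE; case: ifPn => hJK.
- have hKJ : K :\: (K :\: J) = J by rewrite setDDr setDv set0U; apply/setIidPr.
  rewrite (bigD1 (K :\: J)) ?subsetDl //= hKJ ffunE eqxx mulr1 big1 ?addr0 // => I /andP[hIK hI].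
  rewrite ffunE; case: eqP => [hIJ|]; last by rewrite mulr0.
  by move: hI; rewrite -hIJ setDDr setDv set0U (setIidPr hIK) eqxx.
- apply: big1 => I hIK; rewrite ffunE; case: eqP => [hIJ|]; last by rewrite mulr0.
  by move: hJK; rewrite -hIJ subsetDl.
Qed.

Lemma wedge_one (a : cform) : wedge a (one_form R) = a.
Proof.
apply/ffunP => K; rewrite /one_form wedge_basis sub0set setD0.
have -> : inv_cnt K set0 = 0%N.
  by apply/eqP; rewrite cards_eq0; apply/eqP/setP => p; rewrite !inE andbF.
by rewrite expr0 mul1r.
Qed.

Lemma wedge_bset (a b : cform) k : wedge a b (bset k) =
  \sum_(m <- iota 0 64 | subbits m k)
     (-1) ^+ odd (inv_bits m (Nat.ldiff k m)) * a (bset m) * b (bset (Nat.ldiff k m)).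
Proof.
rewrite wedgeE big_mkcond big_sets [RHS]big_mkcond; apply: eq_bigr => m _.
by rewrite subset_bset setD_bset inv_cnt_bset signr_odd.
Qed.

Lemma e_bset j n : (j < 6)%N -> e R (o j) (bset n) = (eqbits n (Nat.pow 2 j))%:R.
Proof. by move=> hj; rewrite ffunE set1_bset // eq_bset. Qed.

Lemma eta_bset (P : 'M[R]_6) r n :
  Defs.eta P r (bset n) = \sum_(j <- iota 0 6) P r (o j) * (eqbits n (Nat.pow 2 j))%:R.
Proof.
rewrite sum_ffunE big_ord6; apply: eq_big_seq => j; rewrite mem_iota => /andP[_ hj].
by rewrite ffunE e_bset.
Qed.

Definition dmask (m i : nat) : nat := Nat.ldiff m (Nat.pow 2 i).

Lemma d_bset (de : structure R) (a : cform) k : d de a (bset k) =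
  \sum_(m <- iota 0 64) a (bset m) *
    \sum_(i <- iota 0 6 | Nat.testbit m i && subbits (dmask m i) k)
      (-1) ^+ (odd (cnt_below m i) (+) odd (inv_bits (Nat.ldiff k (dmask m i)) (dmask m i)))
      * de (o i) (bset (Nat.ldiff k (dmask m i))).
Proof.
rewrite sum_ffunE big_sets; apply: eq_bigr => m _; rewrite ffunE sum_ffunE; congr (_ * _).
rewrite big_mkcond big_ord6 [RHS]big_mkcond; apply: eq_big_seq => i.
rewrite mem_iota => /andP[_ hi].
rewrite in_bset val_o //; case: (Nat.testbit m i) => //=.
rewrite ffunE wedge_basis (set1_bset hi) !setD_bset -/(dmask m i).
rewrite subset_bset inv_cnt_bset card_bset_below.
by case: subbits; rewrite ?mulr0 // signr_addb !signr_odd mulrA.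
Qed.

End FormComponents.

(* Polynomials in the entries [TP i j] of a coframe matrix and in the components [TF m] of
   one form; an [sform] assigns such a polynomial to each component [bset n]. *)
Inductive term :=
  | TP of nat & nat | TF of nat | TAdd of term & term | TMul of term & term
  | TNeg of term | T0 | T1.

Definition tadd x y := match x, y with T0, _ => y | _, T0 => x | _, _ => TAdd x y end.
Definition tmul x y :=
  match x, y with T0, _ | _, T0 => T0 | T1, _ => y | _, T1 => x | _, _ => TMul x y end.
Definition tneg x := match x with T0 => T0 | TNeg y => y | _ => TNeg x end.
Definition tsign (b : bool) x := if b then tneg x else x.
(* Under call-by-value evaluation the second factor is only computed when the first one is
   nonzero, which keeps the symbolic computations below fast. *)
Definition tmul_lazy x (y : unit -> term) := if x is T0 then T0 else tmul x (y tt).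
Definition tsum {I : Type} (l : seq I) (F : I -> term) : term :=
  foldr (fun i acc => tadd (F i) acc) T0 l.

Definition sform := nat -> term.

Definition addT (f g : sform) : sform := fun n => tadd (f n) (g n).
Definition subT (f g : sform) : sform := fun n => tadd (f n) (tneg (g n)).
Definition wedgeT (f g : sform) : sform := fun k =>
  tsum [seq m <- iota 0 64 | subbits m k]
    (fun m => tsign (odd (inv_bits m (Nat.ldiff k m)))
                    (tmul_lazy (f m) (fun _ => g (Nat.ldiff k m)))).
Definition eT (j : nat) : sform := fun n => if eqbits n (Nat.pow 2 j) then T1 else T0.
Definition etaT (r : nat) : sform := fun n => tsum (iota 0 6) (fun j => tmul (TP r j) (eT j n)).
Definition dT (deT : nat -> sform) (f : sform) : sform := fun k =>
  tsum (iota 0 64) (fun m =>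
    tsum [seq i <- iota 0 6 | Nat.testbit m i && subbits (dmask m i) k]
      (fun i => tsign (odd (cnt_below m i) (+) odd (inv_bits (Nat.ldiff k (dmask m i)) (dmask m i)))
                  (tmul_lazy (deT i (Nat.ldiff k (dmask m i))) (fun _ => f m)))).

Arguments addT : simpl never.
Arguments subT : simpl never.
Arguments wedgeT : simpl never.
Arguments eT : simpl never.
Arguments etaT : simpl never.
Arguments dT : simpl never.

Section Interpretation.
Variable R : realType.
Local Notation cform := {ffun {set 'I_6} -> R}.
Variables (P : 'M[R]_6) (a : cform).

Fixpoint interp (x : term) : R :=
  match x with
  | TP i j => P (o i) (o j) | TF m => a (bset m)
  | TAdd x y => interp x + interp y | TMul x y => interp x * interp y
  | TNeg x => - interp x | T0 => 0 | T1 => 1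
  end.

Lemma tadd_interp x y : interp (tadd x y) = interp x + interp y.
Proof. by case: x; case: y => * //=; rewrite ?addr0 ?add0r. Qed.
Lemma tmul_interp x y : interp (tmul x y) = interp x * interp y.
Proof. by case: x; case: y => * //=; rewrite ?mulr0 ?mul0r ?mulr1 ?mul1r. Qed.
Lemma tneg_interp x : interp (tneg x) = - interp x.
Proof. by case: x => * //=; rewrite ?opprK ?oppr0. Qed.
Lemma tmul_lazy_interp x y : interp (tmul_lazy x y) = interp x * interp (y tt).
Proof. by case: x => *; rewrite /tmul_lazy ?tmul_interp //= mul0r. Qed.
Lemma tsign_interp b x : interp (tsign b x) = (-1) ^+ b * interp x.
Proof. by case: b; rewrite /= ?tneg_interp ?mulN1r ?mul1r. Qed.
Lemma tsum_interp {I : Type} (l : seq I) F :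
  interp (tsum l F) = \sum_(i <- l) interp (F i).
Proof. by elim: l => [|i l IH]; rewrite ?big_nil ?big_cons //= tadd_interp IH. Qed.

Definition represents (f : sform) (b : cform) := forall n, interp (f n) = b (bset n).

Lemma TF_rep : represents TF a.
Proof. by []. Qed.

Lemma addT_rep f g b c : represents f b -> represents g c -> represents (addT f g) (b + c).
Proof. by move=> hf hg n; rewrite tadd_interp hf hg ffunE. Qed.

Lemma subT_rep f g b c : represents f b -> represents g c -> represents (subT f g) (b - c).
Proof. by move=> hf hg n; rewrite tadd_interp tneg_interp hf hg !ffunE. Qed.

Lemma wedgeT_rep f g b c : represents f b -> represents g c -> represents (wedgeT f g) (wedge b c).
Proof.
move=> hf hg k; rewrite wedge_bset tsum_interp big_filter.
by apply: eq_bigr => m _; rewrite tsign_interp tmul_lazy_interp hf hg mulrA.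
Qed.

Lemma eT_rep j : (j < 6)%N -> represents (eT j) (e R (o j)).
Proof. by move=> hj n; rewrite e_bset // /eT; case: eqbits. Qed.

Lemma etaT_rep r : represents (etaT r) (Defs.eta P (o r)).
Proof.
move=> n; rewrite eta_bset tsum_interp; apply: eq_big_seq => j; rewrite mem_iota => /andP[_ hj].
by rewrite tmul_interp /= /eT; case: eqbits.
Qed.

Lemma dT_rep (de : structure R) deT f b :
  (forall i, (i < 6)%N -> represents (deT i) (de (o i))) ->
  represents f b -> represents (dT deT f) (d de b).
Proof.
move=> hde hf k; rewrite d_bset tsum_interp; apply: eq_bigr => m _.
rewrite tsum_interp big_filter mulr_sumr big_seq_cond [RHS]big_seq_cond.
apply: eq_bigr => i /andP[]; rewrite mem_iota => /andP[_ hi] _.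
by rewrite tsign_interp tmul_lazy_interp /= (hde i hi) hf; ring.
Qed.

End Interpretation.

Ltac vm_term t := let v := eval vm_compute in t in
  rewrite (_ : t = v); last by vm_compute.

Section UnitMatrix.
Variables (R : fieldType) (n : nat) (P : 'M[R]_n).
Hypothesis Pu : P \in unitmx.

Lemma unitmx_row_comb_eq0 (c : 'I_n -> R) :
  (forall j, \sum_i c i * P i j = 0) -> forall i, c i = 0.
Proof.
move=> H i; have cP0 : \row_i c i *m P = 0.
  by apply/rowP => j; rewrite !mxE -[RHS](H j); apply: eq_bigr => k _; rewrite mxE.
by have /rowP/(_ i) := congr1 (mulmx^~ (invmx P)) cP0; rewrite mulmxK // mul0mx !mxE.
Qed.

Lemma unitmx_col_comb_eq0 (c : 'I_n -> R) :
  (forall i, \sum_j P i j * c j = 0) -> forall j, c j = 0.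
Proof.
move=> H j; have Pc0 : P *m \col_j c j = 0.
  by apply/colP => i; rewrite !mxE -[RHS](H i); apply: eq_bigr => k _; rewrite mxE.
by have /colP/(_ j) := congr1 (mulmx (invmx P)) Pc0; rewrite mulKmx // mulmx0 !mxE.
Qed.

End UnitMatrix.

Lemma unitmx_two_rows_minor (R : realFieldType) n (P : 'M[R]_n) (i0 i1 : 'I_n) :
  P \in unitmx -> i0 != i1 -> ~ (forall a b, P i0 a * P i1 b - P i0 b * P i1 a = 0).
Proof.
move=> Pu hi hminor.
have delta_mul k b (x : R) : \sum_i (if i == k then x else 0) * P i b = x * P k b.
  by rewrite (bigD1 k) //= eqxx big1 ?addr0 // => i /negbTE ->; rewrite mul0r.
(* With all minors zero, [|r0|^2 r1 - <r0, r1> r0 = 0] for the rows [r0], [r1]; so [r0 = 0]. *)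
pose s := \sum_a P i0 a ^+ 2; pose t := \sum_a P i0 a * P i1 a.
have comb b : \sum_i ((if i == i1 then s else 0) - (if i == i0 then t else 0)) * P i b = 0.
  under eq_bigr do rewrite mulrBl.
  rewrite sumrB !delta_mul /s /t !mulr_suml -sumrB; apply: big1 => a _.
  by rewrite -(mulr0 (P i0 a)) -(hminor a b); ring.
have s0 : s = 0.
  by have := unitmx_row_comb_eq0 Pu comb i1; rewrite eqxx eq_sym (negbTE hi) subr0.
have row0 a : P i0 a = 0.
  apply/eqP; rewrite -sqrf_eq0; apply/eqP.
  by move/eqP: s0; rewrite psumr_eq0 => [/allP/(_ a (mem_index_enum a)) /eqP|b _]; rewrite ?sqr_ge0.
have : (if i0 == i0 then 1 else 0) = 0 :> R.
  apply: (unitmx_row_comb_eq0 Pu (c := fun i => if i == i0 then 1 else 0)) => j.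
  by rewrite delta_mul row0 mulr0.
by rewrite eqxx => /eqP; rewrite oner_eq0.
Qed.

Section UnitMatrix6.
Variables (R : fieldType) (P : 'M[R]_6).
Hypothesis Pu : P \in unitmx.

Lemma unitmx6_row_comb_eq0 (r0 r1 r2 r3 r4 r5 : R) :
  (forall j, (j < 6)%N -> r0 * P (o 0) (o j) + r1 * P (o 1) (o j) + r2 * P (o 2) (o j)
     + r3 * P (o 3) (o j) + r4 * P (o 4) (o j) + r5 * P (o 5) (o j) = 0) ->
  [/\ r0 = 0, r1 = 0, r2 = 0, r3 = 0 & r4 = 0 /\ r5 = 0].
Proof.
move=> H; pose c i := nth 0 [:: r0; r1; r2; r3; r4; r5] i.
have c0 := unitmx_row_comb_eq0 Pu (c := c \o @nat_of_ord 6).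
have {}c0 i : (i < 6)%N -> c i = 0.
  move=> hi; rewrite -(val_o hi); apply: c0 => j; rewrite big_ord6 /= -(o_val j).
  by rewrite !big_cons big_nil !val_o // addr0 !addrA; apply: H.
have := (c0 0%N isT, c0 1%N isT, c0 2%N isT, c0 3%N isT, c0 4%N isT, c0 5%N isT).
by rewrite /c /= => -[[[[[-> ->] ->] ->] ->] ->].
Qed.

Lemma unitmx6_col_comb_eq0 (v0 v1 v2 v3 v4 v5 : R) :
  (forall i, (i < 6)%N -> P (o i) (o 0) * v0 + P (o i) (o 1) * v1 + P (o i) (o 2) * v2
     + P (o i) (o 3) * v3 + P (o i) (o 4) * v4 + P (o i) (o 5) * v5 = 0) ->
  [/\ v0 = 0, v1 = 0, v2 = 0, v3 = 0 & v4 = 0 /\ v5 = 0].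
Proof.
move=> H; pose c j := nth 0 [:: v0; v1; v2; v3; v4; v5] j.
have c0 := unitmx_col_comb_eq0 Pu (c := c \o @nat_of_ord 6).
have {}c0 j : (j < 6)%N -> c j = 0.
  move=> hj; rewrite -(val_o hj); apply: c0 => i; rewrite big_ord6 /= -(o_val i).
  by rewrite !big_cons big_nil !val_o // addr0 !addrA; apply: H.
have := (c0 0%N isT, c0 1%N isT, c0 2%N isT, c0 3%N isT, c0 4%N isT, c0 5%N isT).
by rewrite /c /= => -[[[[[-> ->] ->] ->] ->] ->].
Qed.

End UnitMatrix6.

Section Coherence.
Context {R : realType}.
Local Notation cform := {ffun {set 'I_6} -> R}.

Definition theta (P : 'M[R]_6) : cform := wedge (Defs.eta P (o 0)) (Defs.eta P (o 1)).
Definition thetaT : sform := wedgeT (etaT 0) (etaT 1).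
Definition minor01 (P : 'M[R]_6) a b :=
  P (o 0) (o a) * P (o 1) (o b) - P (o 0) (o b) * P (o 1) (o a).

Lemma theta_rep P a : represents P a thetaT (theta P).
Proof. by apply: wedgeT_rep; apply: etaT_rep. Qed.

Lemma wedge_sum_scr (a : cform) (I : Type) (r : seq I) (Q : pred I) (c : I -> R)
    (F : I -> cform) K :
  wedge a (\sum_(i <- r | Q i) sc (c i) (F i)) K = \sum_(i <- r | Q i) c i * wedge a (F i) K.
Proof.
rewrite wedgeE; under eq_bigr do rewrite sum_ffunE mulr_sumr.
rewrite exchange_big; apply: eq_bigr => i _; rewrite wedgeE mulr_sumr.
by apply: eq_bigr => J _; rewrite ffunE; ring.
Qed.

Lemma d_sum_sc (de : structure R) (I : Type) (r : seq I) (c : I -> R) (F : I -> cform) :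
  d de (\sum_(i <- r) sc (c i) (F i)) = \sum_(i <- r) sc (c i) (d de (F i)).
Proof.
apply/ffunP => K; rewrite !sum_ffunE; under eq_bigr do rewrite ffunE sum_ffunE mulr_suml.
rewrite exchange_big; apply: eq_bigr => i _; rewrite !ffunE sum_ffunE mulr_sumr.
by apply: eq_bigr => J _; rewrite !ffunE mulrA.
Qed.

Lemma d_e (de : structure R) j : d de (e R j) = de j.
Proof.
rewrite /d (bigD1 [set j]) //= big1 ?addr0 => [|I hI]; last first.
  by apply/ffunP => K; rewrite !ffunE (negbTE hI) mul0r.
apply/ffunP => K; rewrite [LHS]ffunE [e R j _]ffunE eqxx mul1r /dbasis big_set1 setDv [LHS]ffunE.
have -> : [set k in [set j] | (k < j)%N] = set0.
  by apply/setP => k; rewrite !inE; case: eqP => // ->; rewrite ltnn.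
by rewrite cards0 expr0 mul1r -[basis R set0]/(one_form R) wedge_one.
Qed.

Lemma card_set1_cond (i : 'I_6) (p : pred 'I_6) : #|[set j in [set i] | p j]| = p i.
Proof.
case: (boolP (p i)) => hi.
- have -> : [set j in [set i] | p j] = [set i].
    by apply/setP => j; rewrite !inE; case: eqP => // ->.
  by rewrite cards1.
- have -> : [set j in [set i] | p j] = set0.
    by apply/setP => j; rewrite !inE; case: eqP => // ->; rewrite (negbTE hi).
  by rewrite cards0.
Qed.

Lemma eta_in_span (P : 'M[R]_6) (i : 'I_6) :
  in_span P (Lam (i < 2)%N (2 <= i)%N) (Defs.eta P i).
Proof.
exists (fun J => (J == [set i])%:R); rewrite (bigD1 [set i]) /=; last first.
  by rewrite /Lam /bideg !card_set1_cond.
rewrite big1 ?addr0 => [|J /andP[_ /negbTE ->]]; last by apply/ffunP => K; rewrite !ffunE mul0r.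
by apply/ffunP => K; rewrite /etaw enum_set1 /= wedge_one !ffunE eqxx mul1r.
Qed.

Lemma card_bideg (J : {set 'I_6}) : #|J| = ((bideg J).1 + (bideg J).2)%N.
Proof.
rewrite /= -(cardsID [set j : 'I_6 | (j < 2)%N] J); congr (_ + _)%N; apply: eq_card => j.
  by rewrite !inE andbC.
by rewrite !inE -leqNgt andbC.
Qed.

(* Coherence puts [d eta^i] into bidegrees (2,0) and (1,1): every term meets [V1]. *)
Lemma coherent_target_pair (p q : nat) (J : {set 'I_6}) : (p + q = 1)%N ->
  Lam p.+1 q J || ((bideg J).1 == p.+2) && ((bideg J).2.+1 == q) ->
  exists x y : 'I_6, enum J = [:: x; y] /\ ((x < 2)%N || (y < 2)%N).
Proof.
move=> hpq hJ.
have [hcard hpos] : ((bideg J).1 + (bideg J).2 = 2 /\ 0 < (bideg J).1)%N.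
  have hp : (p = 1 /\ q = 0 \/ p = 0 /\ q = 1)%N by lia.
  by case: hp hJ => [[-> ->]|[-> ->]]; rewrite /Lam; case: (bideg J) => b1 b2 /=;
    case/orP => [/eqP[-> ->] | /andP[/eqP-> /eqP]]; lia.
have cardJ : #|J| = 2%N by rewrite card_bideg.
have [j hj] : exists j, j \in [set j in J | (j < 2)%N] by apply/set0Pn; rewrite -card_gt0.
move: hj; rewrite inE => /andP[hjJ hj2].
have := cardE J; rewrite cardJ; case hE : (enum J) => [|x [|y [|z l]]] //= _.
exists x, y; split => //.
by move: (mem_enum (mem J) j); rewrite hjJ hE !inE => /orP[] /eqP <-; rewrite hj2 ?orbT.
Qed.

(* Bit masks of the 4-element sets {0,1,2,3}, {0,1,2,4}, {0,1,2,5}, {0,1,3,4}, {0,1,3,5},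
   {0,1,4,5}, {0,2,3,4}, {0,2,3,5}. *)
Definition quad_sets : seq nat := [:: 15; 23; 39; 27; 43; 51; 29; 45]%N.

Lemma theta_wedge_eta_pair (P : 'M[R]_6) (x y : 'I_6) K :
  (x < 2)%N || (y < 2)%N -> K \in quad_sets ->
  wedge (theta P) (wedge (Defs.eta P x) (wedge (Defs.eta P y) (one_form R))) (bset K) = 0.
Proof.
move=> hxy hK; rewrite wedge_one -(o_val x) -(o_val y).
rewrite -(wedgeT_rep (theta_rep P 0) (wedgeT_rep (etaT_rep P 0 x) (etaT_rep P 0 y))).
have : (nat_of_ord x = 0 \/ nat_of_ord x = 1 \/ nat_of_ord y = 0 \/ nat_of_ord y = 1)%N.
  by case/orP: hxy; lia.
move: (nat_of_ord x) (nat_of_ord y) => nx ny hxy'.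
move: hK; rewrite !inE.
move=> /or4P[/eqP->|/eqP->|/eqP->|/or4P[/eqP->|/eqP->|/eqP->|/orP[/eqP->|/eqP->]]].
all: match goal with |- interp _ _ ?t = 0 => vm_term t end; rewrite /=.
all: by case: hxy' => [->|[->|[->|->]]]; ring.
Qed.

Lemma coherent_theta_wedge_de (de : structure R) (P : 'M[R]_6) :
  coherent_splitting de P -> forall j K, K \in quad_sets -> wedge (theta P) (de j) (bset K) = 0.
Proof.
move=> [Pu coh] j K hK.
have theta_d_eta i : wedge (theta P) (d de (Defs.eta P i)) (bset K) = 0.
  have [c ->] := coh _ _ _ (eta_in_span P i).
  rewrite wedge_sum_scr big1 // => J /coherent_target_pair [|x [y [hJ hxy]]].
    by case: ltnP.
  by rewrite /etaw hJ /= theta_wedge_eta_pair // mulr0.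
apply: (unitmx_col_comb_eq0 Pu (c := fun j => wedge (theta P) (de j) (bset K))) => i.
rewrite -[RHS](theta_d_eta i) /Defs.eta d_sum_sc wedge_sum_scr.
by apply: eq_bigr => k _; rewrite d_e.
Qed.
End Coherence.

Section Coordinates.
Context {R : realType}.
Implicit Type P : 'M[R]_6.

(* Row [2k] and row [2k+1] of [P] are the real and imaginary parts of the complex 1-form
   [zeta_k = eta^(2k) + i eta^(2k+1)], so column [j] of [P] is a vector [z_j] of [C^3].
   A vector [w] of [C^3] is stored as [w : nat -> R] with coordinates [w (2k) + i w (2k+1)]. *)
Definition zre P k j := P (o k.*2) (o j).
Definition zim P k j := P (o k.*2.+1) (o j).
Definition zcol P b : nat -> R := fun r => P (o r) (o b).
Definition sum3 (f : nat -> R) := f 0%N + f 1%N + f 2%N.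
Definition nxt k := match k with 0 => 1 | 1 => 2 | _ => 0 end%N.
Definition prv k := match k with 0 => 2 | 1 => 0 | _ => 1 end%N.

(* [crossw] is the cross product [z_a x w], [herm] the hermitian product [<z_a, w>], and
   [par_vec a w] is [|z_a|^2 w - <z_a, w> z_a], which vanishes when [w] is parallel to [z_a]. *)
Definition crossw_re P a (w : nat -> R) k :=
  (zre P (nxt k) a * w (prv k).*2 - zim P (nxt k) a * w (prv k).*2.+1) -
  (zre P (prv k) a * w (nxt k).*2 - zim P (prv k) a * w (nxt k).*2.+1).
Definition crossw_im P a (w : nat -> R) k :=
  (zre P (nxt k) a * w (prv k).*2.+1 + zim P (nxt k) a * w (prv k).*2) -
  (zre P (prv k) a * w (nxt k).*2.+1 + zim P (prv k) a * w (nxt k).*2).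
Definition cross_re P a b := crossw_re P a (zcol P b).
Definition cross_im P a b := crossw_im P a (zcol P b).
Definition det_re P a b c :=
  sum3 (fun k => zre P k a * cross_re P b c k - zim P k a * cross_im P b c k).
Definition norm2 P a := sum3 (fun k => zre P k a ^+ 2 + zim P k a ^+ 2).
Definition herm_re P a (w : nat -> R) := sum3 (fun k => zre P k a * w k.*2 + zim P k a * w k.*2.+1).
Definition herm_im P a (w : nat -> R) := sum3 (fun k => zre P k a * w k.*2.+1 - zim P k a * w k.*2).
Definition omega P a b := herm_im P a (zcol P b).
(* Half the coefficient of [e^{a345}] in [omega P /\ omega P]. *)
Definition omega2 P a :=
  omega P a 3 * omega P 4 5 - omega P a 4 * omega P 3 5 + omega P a 5 * omega P 3 4.
Definition par_re P a (w : nat -> R) k :=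
  norm2 P a * w k.*2 - (herm_re P a w * zre P k a - herm_im P a w * zim P k a).
Definition par_im P a (w : nat -> R) k :=
  norm2 P a * w k.*2.+1 - (herm_re P a w * zim P k a + herm_im P a w * zre P k a).
Definition par_vec P a (w : nat -> R) : nat -> R :=
  fun r => if odd r then par_im P a w r./2 else par_re P a w r./2.

(* [Fre]/[Fim] pair with [z_j] to [omega2 j]; [Gre]/[Gim] pair with [z_j] to [det_re j 3 5]. *)
Definition Fre P (w : nat -> R) k :=
  zim P k 3 * herm_im P 4 w - zim P k 4 * herm_im P 3 w + w k.*2.+1 * omega P 3 4.
Definition Fim P (w : nat -> R) k :=
  - (zre P k 3 * herm_im P 4 w - zre P k 4 * herm_im P 3 w + w k.*2 * omega P 3 4).
Definition Gre P k := cross_re P 3 5 k.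
Definition Gim P k := - cross_im P 3 5 k.
Definition pair3 P (fr fi : nat -> R) := sum3 (fun k => - zim P k 3 * fr k + zre P k 3 * fi k).
Definition cross34_norm2 P := sum3 (fun k => cross_re P 3 4 k ^+ 2 + cross_im P 3 4 k ^+ 2).

End Coordinates.

Ltac unfold_coframe := rewrite /par_vec /par_re /par_im /omega2 /omega /det_re /cross_re /cross_im
  /crossw_re  /crossw_im /zcol /norm2 /herm_re /herm_im /sum3 /zre /zim /=.

Ltac unfold_pairings := rewrite /pair3 /cross34_norm2 /Fre /Fim /Gre /Gim; unfold_coframe.

Section SU3Coframe.
Variables (R : realType) (P : 'M[R]_6).

Lemma parallel_of_cross_eq0 a w :
  (forall k, (k < 3)%N -> crossw_re P a w k = 0 /\ crossw_im P a w k = 0) ->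
  forall r, (r < 6)%N -> par_vec P a w r = 0.
Proof.
move=> hc r; have [[[r0 i0] [r1 i1]] [r2 i2]] := (hc 0%N isT, hc 1%N isT, hc 2%N isT).
case: r => [|[|[|[|[|[|r]]]]]] // _; rewrite /par_vec /=.
- have -> : par_re P a w 0 = - (zre P 1 a * crossw_re P a w 2 + zim P 1 a * crossw_im P a w 2)
      + (zre P 2 a * crossw_re P a w 1 + zim P 2 a * crossw_im P a w 1) by unfold_coframe; ring.
  by rewrite ?r0 ?i0 ?r1 ?i1 ?r2 ?i2; ring.
- have -> : par_im P a w 0 = - (zre P 1 a * crossw_im P a w 2 - zim P 1 a * crossw_re P a w 2)
      + (zre P 2 a * crossw_im P a w 1 - zim P 2 a * crossw_re P a w 1) by unfold_coframe; ring.
  by rewrite ?r0 ?i0 ?r1 ?i1 ?r2 ?i2; ring.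
- have -> : par_re P a w 1 = (zre P 0 a * crossw_re P a w 2 + zim P 0 a * crossw_im P a w 2)
      - (zre P 2 a * crossw_re P a w 0 + zim P 2 a * crossw_im P a w 0) by unfold_coframe; ring.
  by rewrite ?r0 ?i0 ?r1 ?i1 ?r2 ?i2; ring.
- have -> : par_im P a w 1 = (zre P 0 a * crossw_im P a w 2 - zim P 0 a * crossw_re P a w 2)
      - (zre P 2 a * crossw_im P a w 0 - zim P 2 a * crossw_re P a w 0) by unfold_coframe; ring.
  by rewrite ?r0 ?i0 ?r1 ?i1 ?r2 ?i2; ring.
- have -> : par_re P a w 2 = - (zre P 0 a * crossw_re P a w 1 + zim P 0 a * crossw_im P a w 1)
      + (zre P 1 a * crossw_re P a w 0 + zim P 1 a * crossw_im P a w 0) by unfold_coframe; ring.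
  by rewrite ?r0 ?i0 ?r1 ?i1 ?r2 ?i2; ring.
- have -> : par_im P a w 2 = - (zre P 0 a * crossw_im P a w 1 - zim P 0 a * crossw_re P a w 1)
      + (zre P 1 a * crossw_im P a w 0 - zim P 1 a * crossw_re P a w 0) by unfold_coframe; ring.
  by rewrite ?r0 ?i0 ?r1 ?i1 ?r2 ?i2; ring.
Qed.

Lemma sqr6_eq0 (x0 x1 x2 x3 x4 x5 : R) :
  x0 ^+ 2 + x1 ^+ 2 + (x2 ^+ 2 + x3 ^+ 2) + (x4 ^+ 2 + x5 ^+ 2) = 0 ->
  [/\ x0 = 0, x1 = 0, x2 = 0, x3 = 0 & x4 = 0 /\ x5 = 0].
Proof.
have := (sqr_ge0 x0, sqr_ge0 x1, sqr_ge0 x2, sqr_ge0 x3, sqr_ge0 x4, sqr_ge0 x5).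
move=> [[[[[h0 h1] h2] h3] h4] h5] hs.
have z x : 0 <= x ^+ 2 -> x ^+ 2 <= 0 -> x = 0.
  by move=> hx hx'; apply/eqP; rewrite -sqrf_eq0 eq_le hx hx'.
by do !split; apply: z => //; lra.
Qed.

Section Obstruction.
Hypothesis Pu : P \in unitmx.
Hypotheses (h045 : det_re P 0 4 5 = 0) (h145 : det_re P 1 4 5 = 0) (h245 : det_re P 2 4 5 = 0)
  (h345 : det_re P 3 4 5 = 0) (h135 : det_re P 1 3 5 = 0) (h235 : det_re P 2 3 5 = 0)
  (hW1 : omega2 P 1 = 0) (hW2 : omega2 P 2 = 0).

Lemma cross45_eq0 k : (k < 3)%N -> crossw_re P 4 (zcol P 5) k = 0 /\ crossw_im P 4 (zcol P 5) k = 0.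
Proof.
move=> hk.
have [c0r c0i c1r c1i [c2r c2i]] : [/\ cross_re P 4 5 0 = 0, - cross_im P 4 5 0 = 0,
    cross_re P 4 5 1 = 0, - cross_im P 4 5 1 = 0 & cross_re P 4 5 2 = 0 /\ - cross_im P 4 5 2 = 0].
  apply: (unitmx6_row_comb_eq0 Pu) => j; case: j => [|[|[|[|[|[|j]]]]]] // _.
  - by apply: (eq_trans _ h045); unfold_coframe; ring.
  - by apply: (eq_trans _ h145); unfold_coframe; ring.
  - by apply: (eq_trans _ h245); unfold_coframe; ring.
  - by apply: (eq_trans _ h345); unfold_coframe; ring.
  - by unfold_coframe; ring.
  - by unfold_coframe; ring.
by move: c0r c0i c1r c1i c2r c2i; rewrite /cross_re /cross_im; case: k hk => [|[|[|k]]] // _; lra.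
Qed.

Lemma par45_eq0 r : (r < 6)%N -> par_vec P 4 (zcol P 5) r = 0.
Proof. exact: (parallel_of_cross_eq0 cross45_eq0 (r := r)). Qed.

Lemma norm2_4_neq0 : norm2 P 4 != 0.
Proof.
apply/eqP; rewrite /norm2 /sum3 /= => /sqr6_eq0[z0 z1 z2 z3 [z4 z5]].
have := @unitmx6_col_comb_eq0 _ P Pu 0 0 0 0 1 0; case; last first.
  by move=> _ _ _ _ [/eqP]; rewrite oner_eq0.
move=> i; rewrite !mulr0 !add0r mulr1 addr0.
by case: i => [|[|[|[|[|[|i]]]]]].
Qed.

Lemma herm_im45_neq0 : herm_im P 4 (zcol P 5) != 0.
Proof.
apply/eqP => hB.
have := @unitmx6_col_comb_eq0 _ P Pu 0 0 0 0 (- herm_re P 4 (zcol P 5)) (norm2 P 4).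
case; last first.
  by move=> _ _ _ _ [_ /eqP]; rewrite (negbTE norm2_4_neq0).
move=> i hi; apply: (eq_trans _ (par45_eq0 hi)).
case: i hi => [|[|[|[|[|[|]]]]]] // _.
all: by rewrite /par_vec /par_re /par_im hB /zcol /zre /zim /=; ring.
Qed.

Lemma omega2_pairing j :
  sum3 (fun k => Fre P (zcol P 5) k * zre P k j + Fim P (zcol P 5) k * zim P k j) = omega2 P j.
Proof. by unfold_pairings; ring. Qed.

Lemma det35_pairing j : sum3 (fun k => Gre P k * zre P k j + Gim P k * zim P k j) = det_re P j 3 5.
Proof. by unfold_pairings; ring. Qed.

Lemma det_re_435 : det_re P 4 3 5 = 0.
Proof.
have -> : det_re P 4 3 5 = - sum3 (fun k => zre P k 3 * crossw_re P 4 (zcol P 5) k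
                                         - zim P k 3 * crossw_im P 4 (zcol P 5) k).
  by unfold_coframe; ring.
have [[[r0 i0] [r1 i1]] [r2 i2]] := (cross45_eq0 (k := 0) isT, cross45_eq0 (k := 1) isT,
  cross45_eq0 (k := 2) isT).
by rewrite /sum3 r0 i0 r1 i1 r2 i2; ring.
Qed.

(* Both pairings vanish on [z_1, ..., z_5], so [F] and [G] are proportional. *)
Lemma F_G_dependent k : (k < 3)%N ->
  det_re P 0 3 5 * Fre P (zcol P 5) k - omega2 P 0 * Gre P k = 0 /\
  det_re P 0 3 5 * Fim P (zcol P 5) k - omega2 P 0 * Gim P k = 0.
Proof.
set g := det_re P 0 3 5; set w := omega2 P 0.
have [n0 n1 n2 n3 [n4 n5]] :
    [/\ g * Fre P (zcol P 5) 0 - w * Gre P 0 = 0, g * Fim P (zcol P 5) 0 - w * Gim P 0 = 0,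
    g * Fre P (zcol P 5) 1 - w * Gre P 1 = 0, g * Fim P (zcol P 5) 1 - w * Gim P 1 = 0 &
    g * Fre P (zcol P 5) 2 - w * Gre P 2 = 0 /\ g * Fim P (zcol P 5) 2 - w * Gim P 2 = 0].
  apply: (unitmx6_row_comb_eq0 Pu) => j hj.
  transitivity (g * omega2 P j - w * det_re P j 3 5).
    by rewrite -omega2_pairing -det35_pairing /sum3 /zre /zim /=; ring.
  case: j hj => [|[|[|[|[|[|j]]]]]] // _.
  - by rewrite /g /w; ring.
  - by rewrite hW1 h135; ring.
  - by rewrite hW2 h235; ring.
  - have -> : omega2 P 3 = 0 by unfold_coframe; ring.
    have -> : det_re P 3 3 5 = 0 by unfold_coframe; ring.
    by ring.
  - have -> : omega2 P 4 = 0 by unfold_coframe; ring.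
    by rewrite det_re_435; ring.
  - have -> : omega2 P 5 = 0 by unfold_coframe; ring.
    have -> : det_re P 5 3 5 = 0 by unfold_coframe; ring.
    by ring.
by case: k => [|[|[|k]]].
Qed.

Lemma det035_cross34_norm2 : det_re P 0 3 5 * cross34_norm2 P = 0.
Proof.
have [[[f0 f0'] [f1 f1']] [f2 f2']] := (F_G_dependent (k := 0) isT, F_G_dependent (k := 1) isT,
  F_G_dependent (k := 2) isT).
set Ft := pair3 P (Fre P (zcol P 5)) (Fim P (zcol P 5)).
have gFt : det_re P 0 3 5 * Ft = 0.
  have G0 : pair3 P (Gre P) (Gim P) = 0 by unfold_pairings; ring.
  transitivity (pair3 P (fun k => det_re P 0 3 5 * Fre P (zcol P 5) k - omega2 P 0 * Gre P k)
                      (fun k => det_re P 0 3 5 * Fim P (zcol P 5) k - omega2 P 0 * Gim P k)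
                + omega2 P 0 * pair3 P (Gre P) (Gim P)); first by rewrite /Ft /pair3 /sum3; ring.
  by rewrite G0 /pair3 /sum3 /= f0 f0' f1 f1' f2 f2'; ring.
(* The parallelism of [z_4] and [z_5] turns [Ft] into a multiple of [cross34_norm2 P]. *)
set pv := par_vec P 4 (zcol P 5).
have key : norm2 P 4 * Ft + herm_im P 4 (zcol P 5) * cross34_norm2 P
           = pair3 P (Fre P pv) (Fim P pv).
  by rewrite /Ft /pv; unfold_pairings; ring.
have par0 : pair3 P (Fre P pv) (Fim P pv) = 0.
  by rewrite /pair3 /Fre /Fim /herm_im /sum3 /= /pv !par45_eq0 //; ring.
apply: (mulIf herm_im45_neq0); rewrite mul0r.
transitivity (det_re P 0 3 5 * (norm2 P 4 * Ft + herm_im P 4 (zcol P 5) * cross34_norm2 P)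
              - norm2 P 4 * (det_re P 0 3 5 * Ft)); first by ring.
by rewrite key par0 gFt; ring.
Qed.

Lemma cross34_norm2_eq0 : cross34_norm2 P = 0.
Proof.
have [hg|hg] := eqVneq (det_re P 0 3 5) 0; last first.
  by move/eqP: det035_cross34_norm2; rewrite mulf_eq0 (negbTE hg) => /eqP.
have [g0r g0i g1r g1i [g2r g2i]] :
    [/\ Gre P 0 = 0, Gim P 0 = 0, Gre P 1 = 0, Gim P 1 = 0 & Gre P 2 = 0 /\ Gim P 2 = 0].
  apply: (unitmx6_row_comb_eq0 Pu) => j hj.
  transitivity (det_re P j 3 5); first by rewrite -det35_pairing /sum3 /zre /zim /=; ring.
  by case: j hj => [|[|[|[|[|[|j]]]]]] // _; rewrite ?hg ?h135 ?h235 ?det_re_435 //;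
    unfold_coframe; ring.
set a := herm_re P 4 (zcol P 5); set b := herm_im P 4 (zcol P 5).
(* [z_5 = lambda z_4] with [lambda = (a + i b) / norm2 P 4], and [z_3 x z_5 = 0]. *)
have hk k : (k < 3)%N ->
    a * cross_re P 3 4 k - b * cross_im P 3 4 k = 0 /\
    a * cross_im P 3 4 k + b * cross_re P 3 4 k = 0.
  move=> hk.
  have idr : a * cross_re P 3 4 k - b * cross_im P 3 4 k
             = norm2 P 4 * cross_re P 3 5 k - crossw_re P 3 (par_vec P 4 (zcol P 5)) k.
    by rewrite /a /b; case: k hk => [|[|[|]]] // _; unfold_pairings; ring.
  have idi : a * cross_im P 3 4 k + b * cross_re P 3 4 k
             = norm2 P 4 * cross_im P 3 5 k - crossw_im P 3 (par_vec P 4 (zcol P 5)) k.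
    by rewrite /a /b; case: k hk {idr} => [|[|[|]]] // _; unfold_pairings; ring.
  have [cr ci] : crossw_re P 3 (par_vec P 4 (zcol P 5)) k = 0 /\
                 crossw_im P 3 (par_vec P 4 (zcol P 5)) k = 0.
    by rewrite /crossw_re /crossw_im; case: k hk {idr idi} => [|[|[|]]] //= _;
      rewrite !par45_eq0 //; split; ring.
  have [gr gi] : cross_re P 3 5 k = 0 /\ cross_im P 3 5 k = 0.
    move: g0r g0i g1r g1i g2r g2i; rewrite /Gre /Gim.
    by case: k hk {idr idi cr ci} => [|[|[|]]] // _; lra.
  by rewrite idr idi cr ci gr gi; split; ring.
have : (a ^+ 2 + b ^+ 2) * cross34_norm2 P = 0.
  transitivity (sum3 (fun k => (a * cross_re P 3 4 k - b * cross_im P 3 4 k) ^+ 2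
                             + (a * cross_im P 3 4 k + b * cross_re P 3 4 k) ^+ 2)).
    by rewrite /cross34_norm2 /sum3; ring.
  rewrite /sum3; have [-> ->] := hk 0%N isT; have [-> ->] := hk 1%N isT.
  by have [-> ->] := hk 2%N isT; ring.
move/eqP; rewrite mulf_eq0 paddr_eq0 ?sqr_ge0 // !sqrf_eq0 (negbTE herm_im45_neq0) andbF /=.
by move/eqP.
Qed.

Lemma su3_obstruction : False.
Proof.
have := cross34_norm2_eq0; rewrite /cross34_norm2 /sum3 => /sqr6_eq0[s0r s0i s1r s1i [s2r s2i]].
have hc k : (k < 3)%N -> crossw_re P 4 (zcol P 3) k = 0 /\ crossw_im P 4 (zcol P 3) k = 0.
  move=> hk; have -> : crossw_re P 4 (zcol P 3) k = - cross_re P 3 4 k.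
    by case: k hk => [|[|[|]]] // _; unfold_coframe; ring.
  have -> : crossw_im P 4 (zcol P 3) k = - cross_im P 3 4 k.
    by case: k hk => [|[|[|]]] // _; unfold_coframe; ring.
  by case: k hk => [|[|[|]]] // _; rewrite ?s0r ?s0i ?s1r ?s1i ?s2r ?s2i oppr0.
have par43 := parallel_of_cross_eq0 hc.
set B := herm_im P 4 (zcol P 5); set C := herm_im P 4 (zcol P 3).
(* [z_3] and [z_5] are complex multiples of [z_4] with non-real ratio [z_5 / z_4]: a real
   linear relation among the columns [3], [4], [5] of [P] follows. *)
have := @unitmx6_col_comb_eq0 _ P Pu 0 0 0 (B * norm2 P 4)
  (- (herm_re P 4 (zcol P 3) * B - herm_re P 4 (zcol P 5) * C)) (- (C * norm2 P 4)).
case; last first.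
  by move=> _ _ _ /eqP; rewrite mulf_eq0 (negbTE herm_im45_neq0) (negbTE norm2_4_neq0).
move=> i hi; transitivity (B * par_vec P 4 (zcol P 3) i - C * par_vec P 4 (zcol P 5) i).
  by rewrite /B /C; case: i hi => [|[|[|[|[|[|]]]]]] // _; unfold_coframe; ring.
by rewrite par43 // par45_eq0 //; ring.
Qed.

End Obstruction.

End SU3Coframe.

Definition g1T (i : nat) : sform :=
  match i with
  | 2 => wedgeT (eT 0) (eT 1) | 3 => wedgeT (eT 0) (eT 2) | 4 => wedgeT (eT 0) (eT 3)
  | 5 => addT (wedgeT (eT 2) (eT 3)) (wedgeT (eT 4) (eT 1)) | _ => fun=> T0
  end%N.
Definition g2T (i : nat) : sform :=
  match i with
  | 4 => addT (wedgeT (eT 0) (eT 3)) (wedgeT (eT 1) (eT 2)) | _ => g1T i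
  end%N.

Definition omegaT : sform :=
  addT (addT (wedgeT (etaT 0) (etaT 1)) (wedgeT (etaT 2) (etaT 3))) (wedgeT (etaT 4) (etaT 5)).
Definition psiT : sform :=
  subT (wedgeT (subT (wedgeT (etaT 0) (etaT 2)) (wedgeT (etaT 1) (etaT 3))) (etaT 4))
       (wedgeT (addT (wedgeT (etaT 0) (etaT 3)) (wedgeT (etaT 1) (etaT 2))) (etaT 5)).

Ltac structure_rep :=
  repeat match goal with
  | |- represents _ _ (addT _ _) _ => apply: addT_rep
  | |- represents _ _ (subT _ _) _ => apply: subT_rep
  | |- represents _ _ (wedgeT _ _) _ => apply: wedgeT_rep
  | |- represents _ _ (eT _) _ => apply: eT_rep
  | |- represents _ _ (etaT _) _ => apply: etaT_rep
  end.

Ltac minor_at H T j K :=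
  move: (H j K isT isT); vm_term (wedgeT thetaT (T j) K); rewrite /minor01 /=; lra.

Section Algebras.
Context {R : realType}.
Local Notation cform := {ffun {set 'I_6} -> R}.
Implicit Types (P : 'M[R]_6) (a : cform).

Lemma g1T_rep P a i : (i < 6)%N -> represents P a (g1T i) (g1 R (o i)).
Proof.
rewrite /g1 => hi; rewrite val_o //.
case: i hi => [|[|[|[|[|[|]]]]]] // _ /=.
1,2: by move=> n; rewrite ffunE.
all: by structure_rep.
Qed.

Lemma g2T_rep P a i : (i < 6)%N -> represents P a (g2T i) (g2 R (o i)).
Proof.
rewrite /g2 => hi; rewrite val_o //.
case: i hi => [|[|[|[|[|[|]]]]]] // _ /=.
1,2: by move=> n; rewrite ffunE.
all: by structure_rep.
Qed.

Definition su3_omega P : cform :=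
  wedge (Defs.eta P (o 0)) (Defs.eta P (o 1)) + wedge (Defs.eta P (o 2)) (Defs.eta P (o 3))
  + wedge (Defs.eta P (o 4)) (Defs.eta P (o 5)).
Definition su3_psi P : cform :=
  (cwedge (cwedge (Defs.eta P (o 0), Defs.eta P (o 1)) (Defs.eta P (o 2), Defs.eta P (o 3)))
          (Defs.eta P (o 4), Defs.eta P (o 5))).1.

Lemma su3_omega_rep P a : represents P a omegaT (su3_omega P).
Proof. by rewrite /omegaT /su3_omega; structure_rep. Qed.

Lemma su3_psi_rep P a : represents P a psiT (su3_psi P).
Proof. by rewrite /psiT /su3_psi /cwedge /=; structure_rep. Qed.

(* 49, 50, 52, 56, 42, 44 are the masks of {0,4,5}, {1,4,5}, {2,4,5}, {3,4,5}, {1,3,5},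
   {2,3,5}. *)
Lemma su3_psi_components P :
  [/\ su3_psi P (bset 49) = det_re P 0 4 5, su3_psi P (bset 50) = det_re P 1 4 5,
      su3_psi P (bset 52) = det_re P 2 4 5, su3_psi P (bset 56) = det_re P 3 4 5
    & su3_psi P (bset 42) = det_re P 1 3 5 /\ su3_psi P (bset 44) = det_re P 2 3 5].
Proof.
have psiE m : su3_psi P (bset m) = interp P 0 (psiT m) by rewrite su3_psi_rep.
by do !split; rewrite psiE;
  match goal with |- interp _ _ (psiT ?m) = _ => vm_term (psiT m) end;
  rewrite /=; unfold_coframe; ring.
Qed.

End Algebras.

Ltac closed_components T rep a :=
  let da := fresh "da" in let dK := fresh "dK" in
  move=> da; assert (dK : forall K, interp 0 a (dT T TF K) = 0)
    by (move=> K; rewrite (dT_rep rep (TF_rep 0 a)) da ffunE; done);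
  have := dK 29%N; vm_term (dT T TF 29); have := dK 51%N; vm_term (dT T TF 51);
  have := dK 53%N; vm_term (dT T TF 53); have := dK 43%N; vm_term (dT T TF 43);
  have := dK 30%N; vm_term (dT T TF 30); have := dK 39%N; vm_term (dT T TF 39);
  rewrite /=; do !split; lra.

(* 55 and 59 are the masks of {0,1,2,4,5} and {0,1,3,4,5}. *)
Ltac omega_wedge_closed T rep P :=
  let dw := fresh "dw" in let wK := fresh "wK" in
  let w55 := fresh "w55" in let w59 := fresh "w59" in
  move=> dw; assert (wK : forall K, interp P 0 (wedgeT (dT T omegaT) omegaT K) = 0)
    by (move=> K; rewrite (wedgeT_rep (dT_rep rep (su3_omega_rep P 0)) (su3_omega_rep P 0)) dw;
        rewrite ffunE; done);
  have := wK 55%N; vm_term (wedgeT (dT T omegaT) omegaT 55);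
  have := wK 59%N; vm_term (wedgeT (dT T omegaT) omegaT 59);
  rewrite /= => w59 w55; split; [apply: eq_trans w55 | apply: eq_trans w59];
  unfold_coframe; ring.

Section StructureEquations.
Variable R : realType.
Local Notation cform := {ffun {set 'I_6} -> R}.
Implicit Types (P : 'M[R]_6) (a : cform).

Lemma g1_closed_components a : d (g1 R) a = 0 ->
  [/\ a (bset 49) = 0, a (bset 50) = 0, a (bset 52) = 0, a (bset 56) = 0
    & a (bset 42) = 0 /\ a (bset 44) = 0].
Proof. by closed_components g1T (g1T_rep 0 a) a. Qed.

Lemma g2_closed_components a : d (g2 R) a = 0 ->
  [/\ a (bset 49) = 0, a (bset 50) = 0, a (bset 52) = 0, a (bset 56) = 0
    & a (bset 42) = 0 /\ a (bset 44) = 0].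
Proof. by closed_components g2T (g2T_rep 0 a) a. Qed.

Lemma g1_omega_closed P : wedge (d (g1 R) (su3_omega P)) (su3_omega P) = 0 ->
  omega2 P 1 = 0 /\ omega2 P 2 = 0.
Proof. by omega_wedge_closed g1T (g1T_rep P 0) P. Qed.

Lemma g2_omega_closed P : wedge (d (g2 R) (su3_omega P)) (su3_omega P) = 0 ->
  omega2 P 1 = 0 /\ omega2 P 2 = 0.
Proof. by omega_wedge_closed g2T (g2T_rep P 0) P. Qed.

End StructureEquations.

Section Obstructions.
Variable R : realType.
Local Notation cform := {ffun {set 'I_6} -> R}.

Lemma not_coherent_of_minors (de : structure R) :
  (forall P, (forall j K, K \in quad_sets -> wedge (theta P) (de j) (bset K) = 0) ->
     forall a b, (a < b < 6)%N -> minor01 P a b = 0) ->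
  ~ has_coherent_splitting de.
Proof.
move=> hmin [P cohP]; have [Pu _] := cohP.
have hm := hmin P (coherent_theta_wedge_de cohP).
apply: (unitmx_two_rows_minor Pu (i0 := o 0) (i1 := o 1)); first by rewrite -val_eqE /= !val_o.
move=> a b; rewrite -(o_val a) -(o_val b).
case: (ltngtP a b) => [hab|hab|->]; last by rewrite subrr.
- by apply: hm; rewrite hab ltn_ord.
- by apply/eqP; rewrite -oppr_eq0 opprB; apply/eqP/hm; rewrite hab ltn_ord.
Qed.

Lemma theta_wedge_common_minors P (de : structure R) :
  de (o 2) = g1 R (o 2) -> de (o 3) = g1 R (o 3) -> de (o 5) = g1 R (o 5) ->
  (forall j K, K \in quad_sets -> wedge (theta P) (de j) (bset K) = 0) ->
  forall a b, (a < b < 6)%N -> (a, b) != (1, 2)%N -> minor01 P a b = 0.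
Proof.
move=> de2 de3 de5 h.
have hT j K : j \in [:: 2; 3; 5]%N -> K \in quad_sets -> interp P 0 (wedgeT thetaT (g1T j) K) = 0.
  move=> hj hK; have hj6 : (j < 6)%N by move: hj; rewrite !inE => /or3P[] /eqP ->.
  rewrite (wedgeT_rep (theta_rep P 0) (g1T_rep P 0 hj6)) -(h (o j) K hK).
  by move: hj; rewrite !inE => /or3P[] /eqP ->; rewrite ?de2 ?de3 ?de5.
have m23 : minor01 P 2 3 = 0 by minor_at hT g1T 2%N 15%N.
have m24 : minor01 P 2 4 = 0 by minor_at hT g1T 2%N 23%N.
have m25 : minor01 P 2 5 = 0 by minor_at hT g1T 2%N 39%N.
have m34 : minor01 P 3 4 = 0 by minor_at hT g1T 2%N 27%N.
have m35 : minor01 P 3 5 = 0 by minor_at hT g1T 2%N 43%N.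
have m45 : minor01 P 4 5 = 0 by minor_at hT g1T 2%N 51%N.
have m13 : minor01 P 1 3 = 0 by minor_at hT g1T 3%N 15%N.
have m14 : minor01 P 1 4 = 0 by minor_at hT g1T 3%N 23%N.
have m15 : minor01 P 1 5 = 0 by minor_at hT g1T 3%N 39%N.
have m01 : minor01 P 0 1 = 0 by minor_at hT g1T 5%N 15%N.
have m02 : minor01 P 0 2 = 0 by minor_at hT g1T 5%N 23%N.
have m03 : minor01 P 0 3 = 0 by minor_at hT g1T 5%N 27%N.
have m04 : minor01 P 0 4 = 0 by minor_at hT g1T 5%N 29%N.
have m05 : minor01 P 0 5 = 0 by minor_at hT g1T 5%N 45%N.
move=> a b /andP[hab hb]; case: b hb hab => [|[|[|[|[|[|b]]]]]] // _.
all: by case: a => [|[|[|[|[|a]]]]].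
Qed.

Lemma no_coherent_splitting_g1 : ~ has_coherent_splitting (g1 R).
Proof.
apply: not_coherent_of_minors => P h a b hab.
have hT K : K \in quad_sets -> interp P 0 (wedgeT thetaT (g1T 4) K) = 0.
  by move=> hK; rewrite (wedgeT_rep (theta_rep P 0) (g1T_rep P 0 (i := 4) isT)) h.
case: (eqVneq (a, b) (1, 2)%N) => [[-> ->]|hne]; last exact: theta_wedge_common_minors.
by move: (hT 15%N isT); vm_term (wedgeT thetaT (g1T 4) 15); rewrite /minor01 /=; lra.
Qed.

Lemma g2_eq_g1 j : (j < 6)%N -> j != 4%N -> g2 R (o j) = g1 R (o j).
Proof. by rewrite /g1 /g2 => hj; rewrite val_o //; case: j hj => [|[|[|[|[|[|]]]]]]. Qed.

Lemma no_coherent_splitting_g2 : ~ has_coherent_splitting (g2 R).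
Proof.
apply: not_coherent_of_minors => P h a b hab.
have hT K : K \in quad_sets -> interp P 0 (wedgeT thetaT (g2T 4) K) = 0.
  by move=> hK; rewrite (wedgeT_rep (theta_rep P 0) (g2T_rep P 0 (i := 4) isT)) h.
have common := theta_wedge_common_minors (g2_eq_g1 (j := 2) isT isT) (g2_eq_g1 (j := 3) isT isT)
  (g2_eq_g1 (j := 5) isT isT) h.
case: (eqVneq (a, b) (1, 2)%N) => [[-> ->]|hne]; last exact: common.
have := common 0%N 3%N isT isT.
by move: (hT 15%N isT); vm_term (wedgeT thetaT (g2T 4) 15); rewrite /minor01 /=; lra.
Qed.

Lemma not_half_flat_of (de : structure R) :
  (forall a : cform, d de a = 0 ->
     [/\ a (bset 49) = 0, a (bset 50) = 0, a (bset 52) = 0, a (bset 56) = 0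
       & a (bset 42) = 0 /\ a (bset 44) = 0]) ->
  (forall P, wedge (d de (su3_omega P)) (su3_omega P) = 0 -> omega2 P 1 = 0 /\ omega2 P 2 = 0) ->
  ~ has_half_flat de.
Proof.
move=> hpsi homega [om [psip [[P [Pu [psim [-> hSU3]]]] [domega dpsi]]]].
have psiE : psip = su3_psi P by rewrite /su3_psi -hSU3.
have [w1 w2] := homega P domega.
move: dpsi; rewrite psiE => /hpsi[].
have [-> -> -> -> [-> ->]] := su3_psi_components P.
move=> z045 z145 z245 z345 [z135 z235].
exact: (su3_obstruction Pu z045 z145 z245 z345 z135 z235 w1 w2).
Qed.

End Obstructions.

Theorem lemma8 (R : realType) (de : structure R) :
  de = g1 R \/ de = g2 R ->
  ~ has_coherent_splitting de /\ ~ has_half_flat de.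
Proof.
case=> ->; split.
- exact: no_coherent_splitting_g1.
- exact: not_half_flat_of (@g1_closed_components R) (@g1_omega_closed R).
- exact: no_coherent_splitting_g2.
- exact: not_half_flat_of (@g2_closed_components R) (@g2_omega_closed R).
Qed.
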